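(* If $S\subseteq\mathbb{N}^{\mathbb{N}}$ is defined by a sentence $\phi$ of $\mathscr{L}_{\max}$ without nested quantifiers (that is, no quantifier appears in the scope of another quantifier), then $S$ is guessable.
   Context: A function $G:\mathbb{N}^{<\mathbb{N}}\to\{0,1\}$ ($\mathbb{N}^{<\mathbb{N}}$ = finite sequences of naturals) is a guesser for $S\subseteq\mathbb{N}^{\mathbb{N}}$ if for every $f:\mathbb{N}\to\mathbb{N}$ there is $m>0$ such that for all $n>m$, $G(f(0),\ldots,f(n))$ equals $1$ if $f\in S$ and $0$ if $f\notin S$; $S$ is guessable if it has a guesser. The language $\mathscr{L}_{\max}$ is a first-order language extended with ellipses: constant symbols $\mathbf{n}$ (also $\bar n$) for each $n\in\mathbb{N}$; an $n$-ary function symbol $\tilde w$ for each $w:\mathbb{N}^n\to\mathbb{N}$ ($n>0$); an $n$-ary predicate symbol $\tilde p$ for each $p\subseteq\mathbb{N}^n$ ($n>0$); an $\mathbb{N}^{<\mathbb{N}}$-ary function symbol $\tilde G$ for each $G:\mathbb{N}^{<\mathbb{N}}\to\mathbb{N}$ (applicable to any finite number of arguments); a unary function symbol $\mathbf{f}$; and a symbol $\cdots_x$ for each variable $x$. Besides the usual terms, for $\mathbb{N}^{<\mathbb{N}}$-ary $G$, terms $u,v$ and variable $x$, $G(u(\mathbf{0}),\cdots_x,u(v))$ is a term with free variables $(FV(u)\setminus\{x\})\cup FV(v)$. Formulas are built as usual. For $f:\mathbb{N}\to\mathbb{N}$, $\mathscr{M}_f$ is the structure on $\mathbb{N}$ interpreting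 every symbol as the object it names and $\mathbf{f}$ as $f$; terms are evaluated as usual, plus $G(u(\mathbf{0}),\cdots_x,u(v))^{s}=G\big(u(x|\mathbf{0})^{s},\ldots,u(x|\overline{v^{s}})^{s}\big)$ under an assignment $s$, where $u(x|c)$ is substitution of the constant $c$ for $x$ in $u$. A sentence $\phi$ defines $S\subseteq\mathbb{N}^{\mathbb{N}}$ if for every $f:\mathbb{N}\to\mathbb{N}$, $\mathscr{M}_f\models\phi$ iff $f\in S$. *)

From Stdlib Require Import List Arith Bool.
Import ListNotations.

(** Variables are indexed by [nat].
    - [tconst n]        : the constant symbol  n-bar
    - [tfun w a args]   : the n-ary function symbol w~ (n = 1 + length args > 0),
                          w : N^n -> N given as a function on lists (only its
                          values on lists of length n matter)
    - [tG G args]       : the N^{<N}-ary function symbol G~ applied to any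
                          finite number of arguments
    - [tf t]            : the unary function symbol  f
    - [tell G u x v]    : the ellipsis term  G(u(0), ..._x, u(v)) *)
Inductive term : Type :=
| tvar (x : nat)
| tconst (n : nat)
| tfun (w : list nat -> nat) (a : term) (args : list term)
| tG (G : list nat -> nat) (args : list term)
| tf (t : term)
| tell (G : list nat -> nat) (u : term) (x : nat) (v : term).

(** Formulas.  [fpred p a args] is the n-ary predicate symbol p~
    (n = 1 + length args > 0), p ⊆ N^n given as a predicate on lists. *)
Inductive formula : Type :=
| fpred (p : list nat -> Prop) (a : term) (args : list term)
| feq (t1 t2 : term)
| fnot (phi : formula)
| fand (phi psi : formula)
| f_or (phi psi : formula)
| fimp (phi psi : formula)
| fall (x : nat) (phi : formula)
| fex (x : nat) (phi : formula).

Definition upd (s : nat -> nat) (x c : nat) : nat -> nat :=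
  fun y => if Nat.eqb y x then c else s y.

Fixpoint eval (f : nat -> nat) (s : nat -> nat) (t : term) : nat :=
  match t with
  | tvar x => s x
  | tconst n => n
  | tfun w a args => w (eval f s a :: map (eval f s) args)
  | tG G args => G (map (eval f s) args)
  | tf t1 => f (eval f s t1)
  | tell G u x v =>
      G (map (fun i => eval f (upd s x i) u) (seq 0 (S (eval f s v))))
  end.

Fixpoint sat (f : nat -> nat) (s : nat -> nat) (phi : formula) : Prop :=
  match phi with
  | fpred p a args => p (eval f s a :: map (eval f s) args)
  | feq t1 t2 => eval f s t1 = eval f s t2
  | fnot p => ~ sat f s p
  | fand p q => sat f s p /\ sat f s q
  | f_or p q => sat f s p \/ sat f s q
  | fimp p q => sat f s p -> sat f s q
  | fall x p => forall c : nat, sat f (upd s x c) p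
  | fex x p => exists c : nat, sat f (upd s x c) p
  end.

Fixpoint term_free (y : nat) (t : term) : bool :=
  match t with
  | tvar x => Nat.eqb x y
  | tconst _ => false
  | tfun _ a args => term_free y a || existsb (term_free y) args
  | tG _ args => existsb (term_free y) args
  | tf t1 => term_free y t1
  | tell _ u x v => (negb (Nat.eqb x y) && term_free y u) || term_free y v
  end.

Fixpoint form_free (y : nat) (phi : formula) : bool :=
  match phi with
  | fpred _ a args => term_free y a || existsb (term_free y) args
  | feq t1 t2 => term_free y t1 || term_free y t2
  | fnot p => form_free y p
  | fand p q | f_or p q | fimp p q => form_free y p || form_free y q
  | fall x p | fex x p => negb (Nat.eqb x y) && form_free y p
  end.

Definition sentence (phi : formula) : Prop := forall y, form_free y phi = false.

Fixpoint qfree (phi : formula) : bool :=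
  match phi with
  | fpred _ _ _ | feq _ _ => true
  | fnot p => qfree p
  | fand p q | f_or p q | fimp p q => qfree p && qfree q
  | fall _ _ | fex _ _ => false
  end.

Fixpoint no_nested_quantifiers (phi : formula) : bool :=
  match phi with
  | fpred _ _ _ | feq _ _ => true
  | fnot p => no_nested_quantifiers p
  | fand p q | f_or p q | fimp p q =>
      no_nested_quantifiers p && no_nested_quantifiers q
  | fall _ p | fex _ p => qfree p
  end.

(** M_f |= phi for a sentence phi (truth does not depend on the assignment). *)
Definition models (f : nat -> nat) (phi : formula) : Prop :=
  sat f (fun _ => 0) phi.

Definition defines (phi : formula) (S : (nat -> nat) -> Prop) : Prop :=
  forall f : nat -> nat, models f phi <-> S f.

Definition prefix (f : nat -> nat) (n : nat) : list nat := map f (seq 0 (S n)).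

Definition guesser (G : list nat -> bool) (S : (nat -> nat) -> Prop) : Prop :=
  forall f : nat -> nat, exists m : nat, 0 < m /\
    forall n : nat, m < n -> (G (prefix f n) = true <-> S f).

Definition guessable (S : (nat -> nat) -> Prop) : Prop :=
  exists G : list nat -> bool, guesser G S.

(* A quantifier-free formula only inspects finitely many values of f: every term
   evaluates to the same value on all g agreeing with f on a long enough initial
   segment.  Hence [exists x, psi] defines an open set of the Baire space and
   [forall x, psi] a closed one.  Open sets are guessable (guess "yes" as soon as
   every extension of the prefix lies in the set), closed sets are guessable by
   complementation, and guessable sets are closed under Boolean combinations,
   which covers all formulas without nested quantifiers. *)
From Stdlib Require Import List Arith Bool Lia Classical ClassicalEpsilon.
Import ListNotations.

Definition agree (N : nat) (f g : nat -> nat) : Prop := forall k, k < N -> g k = f k.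

Lemma agree_weaken N M f g : M <= N -> agree N f g -> agree M f g.
Proof. intros HMN H k Hk; apply H; lia. Qed.

Lemma agree_refl N f : agree N f f.
Proof. now intros k _. Qed.

Lemma map_seq_eq_iff_agree N f g :
  map g (seq 0 N) = map f (seq 0 N) <-> agree N f g.
Proof.
  induction N as [|N IH].
  - split; [intros _ k Hk; lia | reflexivity].
  - rewrite seq_S, !map_app; simpl. split.
    + intros H. apply app_inj_tail in H as [Hl Hn].
      intros k Hk. destruct (Nat.eq_dec k N) as [->|Hne]; [congruence|].
      apply IH; [exact Hl | lia].
    + intros H. f_equal; [apply IH, (agree_weaken (S N)); auto | f_equal; apply H; lia].
Qed.

Section LocallyConstant.

Context (f : nat -> nat).

Definition determined_near {A : Type} (F : (nat -> nat) -> A) : Prop :=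
  exists N, forall g, agree N f g -> F g = F f.

Lemma determined_near_const {A : Type} (a : A) : determined_near (fun _ => a).
Proof. now exists 0. Qed.

Lemma determined_near_point n : determined_near (fun g => g n).
Proof. exists (S n); intros g Hg; apply Hg; lia. Qed.

Lemma determined_near_bind {A B : Type} (F : (nat -> nat) -> A)
    (H : A -> (nat -> nat) -> B) :
  determined_near F -> (forall a, determined_near (H a)) ->
  determined_near (fun g => H (F g) g).
Proof.
  intros [N1 HF] HH. destruct (HH (F f)) as [N2 HN2].
  exists (max N1 N2); intros g Hg.
  rewrite HF by (apply (agree_weaken (max N1 N2)); [lia | exact Hg]).
  apply HN2, (agree_weaken (max N1 N2)); [lia | exact Hg].
Qed.

Lemma determined_near_comp {A B : Type} (k : A -> B) (F : (nat -> nat) -> A) :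
  determined_near F -> determined_near (fun g => k (F g)).
Proof.
  intros HF. apply (determined_near_bind F (fun a _ => k a)); [exact HF |].
  intros a; apply determined_near_const.
Qed.

Lemma determined_near_map2 {A B C : Type} (h : A -> B -> C)
    (F1 : (nat -> nat) -> A) (F2 : (nat -> nat) -> B) :
  determined_near F1 -> determined_near F2 ->
  determined_near (fun g => h (F1 g) (F2 g)).
Proof.
  intros H1 H2. apply (determined_near_bind F1 (fun a g => h a (F2 g))); [exact H1 |].
  intros a; now apply determined_near_comp.
Qed.

Lemma determined_near_map {A B : Type} (h : (nat -> nat) -> A -> B) (l : list A) :
  (forall a, In a l -> determined_near (fun g => h g a)) ->
  determined_near (fun g => map (h g) l).
Proof.
  induction l as [|a l IH]; intros Hl; simpl.
  - apply determined_near_const.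
  - apply (determined_near_map2 cons); [apply Hl; now left |].
    apply IH; intros b Hb; apply Hl; now right.
Qed.

End LocallyConstant.

Section TermNestedInduction.

Variable P : term -> Prop.
Hypotheses
  (Hvar : forall x, P (tvar x))
  (Hconst : forall n, P (tconst n))
  (Hfun : forall w a args, P a -> Forall P args -> P (tfun w a args))
  (HG : forall G args, Forall P args -> P (tG G args))
  (Hf : forall t, P t -> P (tf t))
  (Hell : forall G u x v, P u -> P v -> P (tell G u x v)).

Fixpoint term_ind_nested (t : term) : P t :=
  let fix args_ind (l : list term) : Forall P l :=
    match l with
    | [] => Forall_nil P
    | t :: l => Forall_cons t (term_ind_nested t) (args_ind l)
    end in
  match t with
  | tvar x => Hvar x
  | tconst n => Hconst n
  | tfun w a args => Hfun w a args (term_ind_nested a) (args_ind args)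
  | tG G args => HG G args (args_ind args)
  | tf t1 => Hf t1 (term_ind_nested t1)
  | tell G u x v => Hell G u x v (term_ind_nested u) (term_ind_nested v)
  end.

End TermNestedInduction.

Lemma eval_determined_near t : forall s f, determined_near f (fun g => eval g s t).
Proof.
  induction t as [x | n | w a args IHa IHargs | G args IHargs | t IHt | G u x v IHu IHv]
    using term_ind_nested; intros s f; simpl.
  - apply determined_near_const.
  - apply determined_near_const.
  - apply (determined_near_map2 f (fun a l => w (a :: l))); [apply IHa |].
    apply determined_near_map; intros b Hb.
    rewrite Forall_forall in IHargs; apply IHargs, Hb.
  - apply determined_near_comp, determined_near_map; intros b Hb.
    rewrite Forall_forall in IHargs; apply IHargs, Hb.
  - apply (determined_near_bind f (fun g => eval g s t) (fun n g => g n));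
      [apply IHt | apply determined_near_point].
  - apply (determined_near_bind f (fun g => eval g s v)
      (fun n g => G (map (fun i => eval g (upd s x i) u) (seq 0 (S n)))));
      [apply IHv |].
    intros n; apply determined_near_comp, determined_near_map; intros i _; apply IHu.
Qed.

(* Taking [A := Prop], the combinators apply to formulas verbatim: the equality of
   propositions obtained is syntactic, so no extensionality is needed. *)
Lemma sat_qfree_determined_near phi :
  qfree phi = true -> forall s f, determined_near f (fun g => sat g s phi).
Proof.
  induction phi as [p a args | t1 t2 | phi IH | phi1 IH1 phi2 IH2
    | phi1 IH1 phi2 IH2 | phi1 IH1 phi2 IH2 | x phi _ | x phi _];
    simpl; intros Hq s f; try discriminate;
    try (apply andb_true_iff in Hq as [Hq1 Hq2]).
  - apply (determined_near_map2 f (fun a l => p (a :: l)));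
      [apply eval_determined_near |].
    apply determined_near_map; intros b _; apply eval_determined_near.
  - apply determined_near_map2; apply eval_determined_near.
  - now apply determined_near_comp, IH.
  - apply determined_near_map2; [now apply IH1 | now apply IH2].
  - apply determined_near_map2; [now apply IH1 | now apply IH2].
  - apply determined_near_map2 with (h := fun P Q => P -> Q);
      [now apply IH1 | now apply IH2].
Qed.

Definition open_set (P : (nat -> nat) -> Prop) : Prop :=
  forall f, P f -> exists N, forall g, agree N f g -> P g.

Lemma open_set_determined (P : (nat -> nat) -> Prop) :
  (forall f, determined_near f P) -> open_set P.
Proof.
  intros HP f Hf. destruct (HP f) as [N HN].
  exists N; intros g Hg; now rewrite HN.
Qed.

Lemma open_set_exists {C : Type} (P : C -> (nat -> nat) -> Prop) :
  (forall c, open_set (P c)) -> open_set (fun f => exists c, P c f).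
Proof.
  intros HP f [c Hc]. destruct (HP c f Hc) as [N HN].
  exists N; intros g Hg; exists c; now apply HN.
Qed.

Lemma open_set_not_forall {C : Type} (P : C -> (nat -> nat) -> Prop) :
  (forall c, open_set (fun f => ~ P c f)) -> open_set (fun f => ~ forall c, P c f).
Proof.
  intros HP f Hf. apply not_all_ex_not in Hf as [c Hc].
  destruct (HP c f Hc) as [N HN].
  exists N; intros g Hg Hall; exact (HN g Hg (Hall c)).
Qed.

Lemma guessable_iff (S T : (nat -> nat) -> Prop) :
  (forall f, S f <-> T f) -> guessable S -> guessable T.
Proof.
  intros HST [G HG]. exists G; intros f.
  destruct (HG f) as [m [Hm Hn]]. exists m; split; [exact Hm |].
  intros n Hmn; rewrite <- HST; auto.
Qed.

Lemma guessable_open (P : (nat -> nat) -> Prop) : open_set P -> guessable P.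
Proof.
  intros HP.
  exists (fun l =>
    if excluded_middle_informative
         (forall g, map g (seq 0 (length l)) = l -> P g) then true else false).
  intros f.
  assert (Hext : forall n g,
    map g (seq 0 (length (prefix f n))) = prefix f n <-> agree (S n) f g).
  { intros n g. unfold prefix. rewrite length_map, length_seq.
    apply map_seq_eq_iff_agree. }
  destruct (classic (P f)) as [Hf | Hf].
  - destruct (HP f Hf) as [N HN]. exists (S N); split; [lia |]; intros n Hn.
    destruct excluded_middle_informative as [_ | Hnot]; [tauto |].
    exfalso; apply Hnot; intros g Hg. apply Hext in Hg.
    apply HN, (agree_weaken (S n)); [lia | exact Hg].
  - exists 1; split; [lia |]; intros n _.
    destruct excluded_middle_informative as [Hall | _]; [| split; [discriminate | tauto]].
    exfalso; apply Hf, Hall, Hext, agree_refl.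
Qed.

Lemma guessable_not (P : (nat -> nat) -> Prop) :
  guessable P -> guessable (fun f => ~ P f).
Proof.
  intros [G HG]. exists (fun l => negb (G l)); intros f.
  destruct (HG f) as [m [Hm Hn]]. exists m; split; [exact Hm |]; intros n Hmn.
  specialize (Hn n Hmn). destruct (G (prefix f n)); simpl; intuition discriminate.
Qed.

Lemma guessable_closed (P : (nat -> nat) -> Prop) :
  open_set (fun f => ~ P f) -> guessable P.
Proof.
  intros HP. apply (guessable_iff (fun f => ~ ~ P f)).
  - intros f; split; [apply NNPP | tauto].
  - now apply guessable_not, guessable_open.
Qed.

Lemma guessable_combine (op : bool -> bool -> bool) (C : Prop -> Prop -> Prop)
    (S1 S2 : (nat -> nat) -> Prop) :
  (forall P1 P2 b1 b2, reflect P1 b1 -> reflect P2 b2 -> reflect (C P1 P2) (op b1 b2)) ->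
  guessable S1 -> guessable S2 -> guessable (fun f => C (S1 f) (S2 f)).
Proof.
  intros Hop [G1 H1] [G2 H2]. exists (fun l => op (G1 l) (G2 l)); intros f.
  destruct (H1 f) as [m1 [_ K1]], (H2 f) as [m2 [_ K2]].
  exists (S (max m1 m2)); split; [lia |]; intros n Hn.
  symmetry; apply reflect_iff, Hop; apply iff_reflect; symmetry; [apply K1 | apply K2]; lia.
Qed.

Lemma guessable_sat_qfree phi s :
  qfree phi = true -> guessable (fun f => sat f s phi).
Proof.
  intros Hq. apply guessable_open, open_set_determined.
  now apply sat_qfree_determined_near.
Qed.

Lemma guessable_sat phi :
  no_nested_quantifiers phi = true -> forall s, guessable (fun f => sat f s phi).
Proof.
  induction phi as [p a args | t1 t2 | phi IH | phi1 IH1 phi2 IH2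
    | phi1 IH1 phi2 IH2 | phi1 IH1 phi2 IH2 | x phi _ | x phi _];
    cbn [no_nested_quantifiers]; intros Hn s;
    try (apply andb_true_iff in Hn as [Hn1 Hn2]);
    [now apply guessable_sat_qfree | now apply guessable_sat_qfree | cbn [sat] ..].
  - now apply guessable_not, IH.
  - apply (guessable_combine andb and); [| now apply IH1 | now apply IH2].
    intros P1 P2 b1 b2 [] []; constructor; tauto.
  - apply (guessable_combine orb or); [| now apply IH1 | now apply IH2].
    intros P1 P2 b1 b2 [] []; constructor; tauto.
  - apply (guessable_combine implb (fun P Q => P -> Q)); [| now apply IH1 | now apply IH2].
    intros P1 P2 b1 b2 [] []; constructor; tauto.
  - apply guessable_closed, open_set_not_forall; intros c.
    apply open_set_determined; intros f.
    now apply determined_near_comp, sat_qfree_determined_near.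
  - apply guessable_open, open_set_exists; intros c.
    apply open_set_determined; intros f.
    now apply sat_qfree_determined_near.
Qed.

Theorem lemma4p10 (S : (nat -> nat) -> Prop) (phi : formula) :
  sentence phi -> no_nested_quantifiers phi = true -> defines phi S ->
  guessable S.
Proof.
  intros _ Hnested Hdef.
  apply (guessable_iff (fun f => models f phi)); [exact Hdef |].
  now apply guessable_sat.
Qed.
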